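(* There are infinitely many values $\lambda\in(\sqrt{2},2)$ such that the tent map $T_\lambda:[0,1]\to[0,1]$ admits a closed set $L\subset[0,1]$ which is internally chain transitive but is not equal to $\omega(x,T_\lambda)$ for any $x\in[0,1]$.
   Context: For $\lambda\in(1,2]$ the tent map $T_\lambda:[0,1]\to[0,1]$ is $T_\lambda(x)=\lambda x$ for $x\in[0,1/2]$ and $T_\lambda(x)=\lambda(1-x)$ for $x\in[1/2,1]$; its critical point is $c=1/2$. For a continuous map $f$ on a compact metric space $(X,d)$: a $\delta$-pseudo-orbit is a finite or infinite sequence $\langle x_0,x_1,\dots\rangle$ with $d(f(x_i),x_{i+1})<\delta$ for all $i$; a set $A\subset X$ is internally chain transitive if for all $x,y\in A$ and every $\delta>0$ there is a $\delta$-pseudo-orbit $\langle x=x_0,x_1,\dots,x_n=y\rangle$ with all $x_i\in A$. The $\omega$-limit set of $x$ is $\omega(x,f)=\bigcap_{n\in\mathbb N}\overline{\{f^k(x):k\ge n\}}$. *)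

From Stdlib Require Import Reals Rtopology List.
Open Scope R_scope.

Definition tent (lam x : R) : R :=
  if Rle_dec x (1/2) then lam * x else lam * (1 - x).

Definition unit_interval (x : R) : Prop := 0 <= x <= 1.

Definition pseudo_orbit (f : R -> R) (delta : R) (z : nat -> R) (n : nat) : Prop :=
  forall i, (i < n)%nat -> Rabs (f (z i) - z (S i)) < delta.

Definition internally_chain_transitive (f : R -> R) (A : R -> Prop) : Prop :=
  forall x y, A x -> A y -> forall delta, delta > 0 ->
    exists (n : nat) (z : nat -> R),
      (1 <= n)%nat /\ z 0%nat = x /\ z n = y /\
      (forall i, (i <= n)%nat -> A (z i)) /\ pseudo_orbit f delta z n.

Definition omega_limit (f : R -> R) (x : R) (y : R) : Prop :=
  forall N : nat, forall eps, eps > 0 ->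
    exists k : nat, (N <= k)%nat /\ Rabs (Nat.iter k f x - y) < eps.

(* Fix l in [13/8, 2).  T_l has the period-three orbit q1 -> q2 -> q3 -> q1
   (q1 < c = 1/2 < q2 < q3) and the critical orbit c -> crit1 = l/2 ->
   crit2 = l (1 - l/2) -> l crit2 -> ...; the parameters we use are those for
   which this orbit lands on q3 after k+3 steps (l^(k+1) crit2 = q3).  Near
   the periodic orbit T^3 expands by l^3, so c has a backward orbit w
   converging to {q1,q2,q3}.  L is the critical orbit up to q3, together with
   the backward orbit w and its limit.
   - L is closed: a finite set plus three convergent sequences with limits.
   - L is internally chain transitive: every point reaches q3 along true
     orbits, a single small jump at q2 leads to a point of w near q3, and
     w reaches every point of L.
   - L is not an omega-limit set: it has a gap (q3, crit1), but an orbit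
     accumulating on crit2 and on c is pushed into that gap infinitely often
     by the expansion near q3.
   Such parameters exist for every k >= 2 (intermediate value theorem) and
   are pairwise distinct, so no finite list contains them all. *)

From Stdlib Require Import Reals Rtopology List.
Open Scope R_scope.
From Stdlib Require Import Lra Lia Psatz Classical ClassicalEpsilon.

(** * Chains of pseudo-orbits *)

Definition chain (f : R -> R) (A : R -> Prop) (d x y : R) : Prop :=
  exists n z, (1 <= n)%nat /\ z 0%nat = x /\ z n = y /\
    (forall i, (i <= n)%nat -> A (z i)) /\ pseudo_orbit f d z n.

Lemma chain_jump f A d x y : A x -> A y -> Rabs (f x - y) < d -> chain f A d x y.
Proof.
  intros Ax Ay Hxy. exists 1%nat, (fun i => if Nat.eqb i 0 then x else y).
  repeat split; auto.
  - intros i _. destruct (Nat.eqb i 0); auto.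
  - intros i Hi. replace i with 0%nat by lia. exact Hxy.
Qed.

Lemma chain_trans f A d x y w : chain f A d x y -> chain f A d y w -> chain f A d x w.
Proof.
  intros [n1 [z1 [Hn1 [Hz1 [Hy1 [HA1 Hp1]]]]]] [n2 [z2 [Hn2 [Hz2 [Hy2 [HA2 Hp2]]]]]].
  exists (n1 + n2)%nat, (fun i => if Nat.leb i n1 then z1 i else z2 (i - n1)%nat).
  repeat split.
  - lia.
  - exact Hz1.
  - destruct (Nat.leb_spec (n1 + n2) n1); [lia|].
    now replace (n1 + n2 - n1)%nat with n2 by lia.
  - intros i Hi. destruct (Nat.leb_spec i n1); [apply HA1 | apply HA2]; lia.
  - intros i Hi. destruct (Nat.leb_spec i n1), (Nat.leb_spec (S i) n1).
    + apply Hp1. lia.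
    + replace i with n1 by lia. replace (S n1 - n1)%nat with 1%nat by lia.
      rewrite Hy1, <- Hz2. apply Hp2. lia.
    + lia.
    + replace (S i - n1)%nat with (S (i - n1)) by lia. apply Hp2. lia.
Qed.

Definition reach (f : R -> R) (A : R -> Prop) (d x y : R) : Prop :=
  x = y \/ chain f A d x y.

Lemma reach_step f A d x y : d > 0 -> A x -> A y -> f x = y -> reach f A d x y.
Proof.
  intros Hd Ax Ay <-. right. apply chain_jump; auto.
  unfold Rminus. rewrite Rplus_opp_r, Rabs_R0. lra.
Qed.

Lemma reach_trans f A d x y w : reach f A d x y -> reach f A d y w -> reach f A d x w.
Proof.
  intros [->|H] [<-|G]; unfold reach; auto. right. eapply chain_trans; eauto.
Qed.

Lemma reach_chain f A d x y w v :
  reach f A d x y -> chain f A d y w -> reach f A d w v -> chain f A d x v.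
Proof. intros [->|H] G [<-|K]; eauto using chain_trans. Qed.

Lemma reach_iterates f A d x n :
  d > 0 -> (forall i, (i <= n)%nat -> A (Nat.iter i f x)) ->
  forall i, (i <= n)%nat -> reach f A d (Nat.iter i f x) (Nat.iter n f x).
Proof.
  intros Hd HA i Hi. remember (n - i)%nat as m eqn:Hm. revert i Hi Hm.
  induction m as [|m IH]; intros i Hi Hm.
  - replace i with n by lia. now left.
  - apply reach_trans with (Nat.iter (S i) f x).
    + apply reach_step; auto with arith. apply HA; lia.
    + apply IH; lia.
Qed.

(** * Closed sets *)

Lemma closed_ext (A B : R -> Prop) : (forall y, A y <-> B y) -> closed_set A -> closed_set B.
Proof.
  intros E HA y Hy. destruct (HA y) as [del Hdel].
  { intro Ay. apply Hy, E, Ay. }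
  exists del. intros z Hz Bz. apply (Hdel z Hz), E, Bz.
Qed.

Lemma closed_union (A B : R -> Prop) :
  closed_set A -> closed_set B -> closed_set (fun y => A y \/ B y).
Proof.
  intros HA HB y Hy.
  destruct (open_set_P3 _ _ HA HB y) as [del Hdel].
  { split; intro; apply Hy; auto. }
  exists del. intros z Hz [Az|Bz]; destruct (Hdel z Hz) as [nA nB]; auto.
Qed.

Lemma closed_point (u : R) : closed_set (fun y => y = u).
Proof.
  intros y Hy. unfold complementary in Hy.
  assert (Hpos : 0 < Rabs (y - u)) by (apply Rabs_pos_lt; lra).
  exists (mkposreal _ Hpos). intros z Hz Ez. subst z. unfold disc in Hz; simpl in Hz.
  rewrite Rabs_minus_sym in Hz. lra.
Qed.

Lemma closed_initial_segment (s : nat -> R) (N : nat) :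
  closed_set (fun y => exists i, (i <= N)%nat /\ y = s i).
Proof.
  induction N as [|N IH].
  - apply (closed_ext (fun y => y = s 0%nat)); [|apply closed_point].
    split; [intros ->; exists 0%nat; auto | intros [i [Hi ->]]; f_equal; lia].
  - refine (closed_ext _ _ _ (closed_union _ _ IH (closed_point (s (S N))))).
    intro y; split.
    + intros [[i [Hi ->]]| ->]; [exists i | exists (S N)]; split; auto.
    + intros [i [Hi ->]]. destruct (Nat.eq_dec i (S N)) as [->|Hne]; [now right|].
      left; exists i; split; [lia|auto].
Qed.

Lemma closed_convergent (s : nat -> R) (u : R) :
  Un_cv s u -> closed_set (fun y => y = u \/ exists n, y = s n).
Proof.
  intros Hs y Hy. unfold complementary in Hy.
  assert (Hd : 0 < Rabs (y - u) / 2) by (assert (0 < Rabs (y - u)) by (apply Rabs_pos_lt; lra); lra).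
  destruct (Hs _ Hd) as [N HN]. unfold R_dist in HN.
  destruct (closed_initial_segment s N y) as [del Hdel].
  { intros [i [_ ->]]. apply Hy. right. eauto. }
  assert (Hm : 0 < Rmin del (Rabs (y - u) / 2)) by (apply Rmin_pos; [apply cond_pos | exact Hd]).
  exists (mkposreal _ Hm). intros z Hz Lz. unfold disc in Hz; simpl in Hz.
  pose proof (Rmin_l del (Rabs (y - u) / 2)). pose proof (Rmin_r del (Rabs (y - u) / 2)).
  destruct Lz as [->|[n ->]].
  - rewrite Rabs_minus_sym in Hz. lra.
  - destruct (Nat.le_gt_cases n N) as [Hn|Hn].
    + apply (Hdel (s n)); [unfold disc; lra | eauto].
    + specialize (HN n ltac:(lia)).
      pose proof (Rabs_triang (y - s n) (s n - u)).
      replace (y - s n + (s n - u)) with (y - u) in * by ring.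
      rewrite Rabs_minus_sym in Hz. lra.
Qed.

Lemma cv_geometric (u v r : R) : 0 <= r < 1 -> Un_cv (fun n => u + r ^ n * v) u.
Proof.
  intros Hr eps Heps. destruct (Req_dec v 0) as [->|Hv].
  { exists 0%nat. intros n _. unfold R_dist. rewrite Rmult_0_r, Rplus_0_r, Rminus_diag, Rabs_R0. exact Heps. }
  assert (Hv' : 0 < Rabs v) by (apply Rabs_pos_lt; exact Hv).
  destruct (pow_lt_1_zero r) with (y := eps / Rabs v) as [N HN].
  { rewrite Rabs_pos_eq; lra. } { apply Rdiv_lt_0_compat; assumption. }
  exists N. intros n Hn. unfold R_dist.
  replace (u + r ^ n * v - u) with (r ^ n * v) by ring. rewrite Rabs_mult.
  specialize (HN n Hn). apply Rmult_lt_compat_r with (r := Rabs v) in HN; [|exact Hv'].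
  replace (eps / Rabs v * Rabs v) with eps in HN by (field; lra). exact HN.
Qed.

(** * Omega-limit sets *)

(* If an orbit returns infinitely often to [[alpha, beta]], its omega-limit set
   meets [[alpha, beta]] (Bolzano-Weierstrass on the returning subsequence). *)
Lemma omega_meets_interval (f : R -> R) (x alpha beta : R) :
  (forall N, exists s, (N <= s)%nat /\ alpha <= Nat.iter s f x <= beta) ->
  exists y, alpha <= y <= beta /\ omega_limit f x y.
Proof.
  intros Hret.
  destruct (choice _ Hret) as [g Hg].
  destruct (Bolzano_Weierstrass (fun m => Nat.iter (g m) f x) (fun c => alpha <= c <= beta)
              (compact_P3 alpha beta)) as [y Hy].
  { intro m. apply Hg. }
  assert (Hnear : forall N eps, eps > 0 ->
            exists p, (N <= p)%nat /\ Rabs (Nat.iter (g p) f x - y) < eps).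
  { intros N eps Heps. destruct (Hy (disc y (mkposreal eps Heps)) N) as [p Hp]; eauto.
    exists (mkposreal eps Heps). intros z Hz. exact Hz. }
  exists y. split.
  - split; apply Rnot_lt_le; intro Hlt.
    + destruct (Hnear 0%nat (alpha - y)) as [p [_ Hp]]; [lra|].
      destruct (Hg p) as [_ [Hp' _]]. apply Rabs_def2 in Hp. lra.
    + destruct (Hnear 0%nat (y - beta)) as [p [_ Hp]]; [lra|].
      destruct (Hg p) as [_ [_ Hp']]. apply Rabs_def2 in Hp. lra.
  - intros N eps Heps. destruct (Hnear N eps Heps) as [p [Hp Hclose]].
    exists (g p). split; [destruct (Hg p); lia | exact Hclose].
Qed.

Lemma tent_left lam x : x <= 1/2 -> tent lam x = lam * x.
Proof. intro H. unfold tent. destruct (Rle_dec x (1/2)); [reflexivity | lra]. Qed.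

Lemma tent_right lam x : 1/2 <= x -> tent lam x = lam * (1 - x).
Proof.
  intro H. unfold tent. destruct (Rle_dec x (1/2)); [|reflexivity].
  replace x with (1/2) by lra. lra.
Qed.

Lemma tent_le_peak lam x : 0 <= lam -> tent lam x <= lam / 2.
Proof. intro H. unfold tent. destruct (Rle_dec x (1/2)); nra. Qed.

Lemma core_invariant lam y : 1 <= lam <= 2 ->
  lam * (1 - lam/2) <= y <= lam/2 -> lam * (1 - lam/2) <= tent lam y <= lam/2.
Proof.
  intros Hl Hy. split; [|apply tent_le_peak; lra].
  destruct (Rle_dec y (1/2)).
  - rewrite tent_left by lra. nra.
  - rewrite tent_right by lra. nra.
Qed.

(* For [1 < lam < 2], every orbit accumulating at [T^2 c] eventually enters
   the core: below [T^2 c <= 1/2] the orbit grows geometrically. *)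
Lemma orbit_enters_core lam x : 1 < lam < 2 ->
  omega_limit (tent lam) x (lam * (1 - lam/2)) ->
  exists t0, forall t, (t0 <= t)%nat ->
    lam * (1 - lam/2) <= Nat.iter t (tent lam) x <= lam/2.
Proof.
  intros Hl Hom. set (b := lam * (1 - lam/2)) in *.
  assert (Hb : 0 < b <= 1/2) by (unfold b; split; nra).
  destruct (classic (exists t, (1 <= t)%nat /\ b <= Nat.iter t (tent lam) x))
    as [[t0 [Ht0 Hb0]]|Hbelow].
  - exists t0. intros t Ht. replace t with ((t - t0) + t0)%nat by lia.
    induction (t - t0)%nat as [|j IH]; simpl.
    + split; [exact Hb0|]. destruct t0 as [|t0]; [lia|]. apply tent_le_peak. lra.
    + apply core_invariant; [lra | exact IH].
  - exfalso.
    assert (Hlt : forall t, (1 <= t)%nat -> Nat.iter t (tent lam) x < b).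
    { intros t Ht. apply Rnot_le_lt. intro. apply Hbelow. eauto. }
    assert (Hgeom : forall j, Nat.iter (S j) (tent lam) x = lam ^ j * tent lam x).
    { induction j as [|j IH]; [simpl; ring|].
      change (Nat.iter (S (S j)) (tent lam) x) with (tent lam (Nat.iter (S j) (tent lam) x)).
      rewrite tent_left by (specialize (Hlt (S j) ltac:(lia)); lra). rewrite IH. simpl. ring. }
    destruct (Hom 1%nat (b/2)) as [t [Ht Hclose]]; [lra|].
    apply Rabs_def2 in Hclose.
    assert (Hpos : 0 < tent lam x).
    { destruct t as [|t]; [lia|]. rewrite Hgeom in Hclose.
      assert (0 < lam ^ t) by (apply pow_lt; lra).
      apply Rnot_le_lt. intro Hneg.
      assert (lam ^ t * tent lam x <= 0) by (rewrite <- (Rmult_0_r (lam ^ t)); apply Rmult_le_compat_l; lra).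
      lra. }
    destruct (Pow_x_infinity lam) with (b := b / tent lam x) as [N HN].
    { rewrite Rabs_pos_eq; lra. }
    specialize (HN N (le_n N)). rewrite Rabs_pos_eq in HN by (apply pow_le; lra).
    specialize (Hlt (S N) ltac:(lia)). rewrite Hgeom in Hlt.
    apply Rge_le, Rmult_le_compat_r with (r := tent lam x) in HN; [|lra].
    replace (b / tent lam x * tent lam x) with b in HN by (field; lra). lra.
Qed.

(** * Dynamics of [T_l] for [13/8 <= l < 2] *)

Section Tent.
Variable l : R.
Hypothesis Hl : 13/8 <= l < 2.

Definition denom : R := 1 + l + l * l.
Definition q1 : R := l / denom.
Definition q2 : R := l * l / denom.
Definition q3 : R := (l + l * l) / denom.
Definition crit1 : R := l / 2.
Definition crit2 : R := l * (1 - l / 2).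

Lemma denom_pos : 0 < denom.
Proof. unfold denom. nra. Qed.

(* The ordering of the relevant points; [crit2 < q1] uses that [l] exceeds
   the golden mean. *)
Lemma point_order : 0 < crit2 < q1 /\ q1 < 1/2 < q2 /\ q2 < q3 < crit1.
Proof.
  pose proof denom_pos as Hd.
  assert (E1 : q1 * denom = l) by (unfold q1; field; lra).
  assert (E2 : q2 * denom = l * l) by (unfold q2; field; lra).
  assert (E3 : q3 * denom = l + l * l) by (unfold q3; field; lra).
  unfold crit1, crit2, denom in *. destruct Hl.
  repeat split; try nra.
  assert (l * l - l - 1 > 0) by nra.
  assert ((l * (1 - l/2)) * (1 + l + l * l) = l - (l * l / 2) * (l * l - l - 1)) by field.
  nra.
Qed.

Lemma q1_image : l * q1 = q2.
Proof. pose proof denom_pos. unfold q1, q2. field. lra. Qed.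
Lemma q2_image : l * (1 - q2) = q3.
Proof. pose proof denom_pos. unfold q2, q3, denom in *. field. lra. Qed.
Lemma q3_image : l * (1 - q3) = q1.
Proof. pose proof denom_pos. unfold q1, q3, denom in *. field. lra. Qed.

Lemma tent_q1 : tent l q1 = q2.
Proof. pose proof point_order. rewrite tent_left by lra. apply q1_image. Qed.
Lemma tent_q2 : tent l q2 = q3.
Proof. pose proof point_order. rewrite tent_right by lra. apply q2_image. Qed.
Lemma tent_q3 : tent l q3 = q1.
Proof. pose proof point_order. rewrite tent_right by lra. apply q3_image. Qed.

Lemma tent_half : tent l (1/2) = crit1.
Proof. rewrite tent_left by lra. unfold crit1. field. Qed.
Lemma tent_crit1 : tent l crit1 = crit2.
Proof. pose proof point_order. rewrite tent_right by lra. reflexivity. Qed.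

(** Near the
    periodic orbit, three steps of [T] expand by [l^3]; so the points
    [q_i + r^n * dev_i] with [r = 1/l^3] form a backward orbit of [c]. *)

Definition ratio : R := / (l * l * l).
Definition dev1 : R := 1/2 - q1.
Definition w1 (n : nat) : R := q1 + ratio ^ n * dev1.
Definition w2 (n : nat) : R := q2 + ratio ^ n * (dev1 / (l * l)).
Definition w3 (n : nat) : R := q3 + ratio ^ n * (- (dev1 / l)).

Lemma ratio_bounds : 0 < ratio < 1.
Proof.
  unfold ratio. destruct Hl. split.
  - apply Rinv_0_lt_compat. nra.
  - rewrite <- Rinv_1. apply Rinv_lt_contravar; nra.
Qed.

Lemma ratio_pow_bounds n : 0 < ratio ^ n <= 1.
Proof.
  pose proof ratio_bounds. split; [apply pow_lt; lra|].
  rewrite <- (pow1 n). apply pow_incr. lra.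
Qed.

(* The deviations are small enough to keep each [w] on the same side of [c]
   as the periodic point it approaches. *)
Lemma deviation_bounds : 0 < dev1 /\ 1/2 <= q3 - dev1 / l /\ q2 + dev1 / (l * l) < q3.
Proof.
  pose proof denom_pos as Hd. pose proof point_order. destruct Hl.
  assert (E1 : q1 * denom = l) by (unfold q1; field; lra).
  assert (E2 : q2 * denom = l * l) by (unfold q2; field; lra).
  assert (E3 : q3 * denom = l + l * l) by (unfold q3; field; lra).
  unfold dev1, denom in *. repeat split; [lra| |].
  - apply Rmult_le_reg_r with l; [lra|]. field_simplify; [nra|lra].
  - apply Rmult_lt_reg_r with (l * l); [nra|]. field_simplify; [nra|lra].
Qed.

Lemma w_bounds n : q1 < w1 n <= 1/2 /\ q2 < w2 n < q3 /\ 1/2 <= w3 n < q3.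
Proof.
  pose proof (ratio_pow_bounds n). pose proof deviation_bounds as [He [H3 H2]].
  destruct Hl. unfold w1, w2, w3, dev1 in *.
  assert (0 < dev1 / l) by (unfold dev1; apply Rdiv_lt_0_compat; lra).
  assert (0 < dev1 / (l * l)) by (unfold dev1; apply Rdiv_lt_0_compat; nra).
  unfold dev1 in *. repeat split; nra.
Qed.

Lemma w1_0 : w1 0 = 1/2.
Proof. unfold w1, dev1. simpl. ring. Qed.

Lemma tent_w3 n : tent l (w3 n) = w1 n.
Proof.
  pose proof (w_bounds n). rewrite tent_right by lra. destruct Hl.
  unfold w3, w1. rewrite <- q3_image. field. lra.
Qed.

Lemma tent_w2 n : tent l (w2 n) = w3 n.
Proof.
  pose proof (w_bounds n). pose proof point_order. rewrite tent_right by lra.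
  destruct Hl. unfold w2, w3. rewrite <- q2_image. field. lra.
Qed.

Lemma tent_w1 n : tent l (w1 (S n)) = w2 n.
Proof.
  pose proof (w_bounds (S n)). rewrite tent_left by lra. destruct Hl.
  unfold w1, w2, ratio. simpl. rewrite <- q1_image. field. lra.
Qed.

(** Expansion away from the periodic orbit, used to show that an orbit
    accumulating on [crit2] also accumulates strictly between [q3] and
    [crit1], where the set [L] below has a gap. *)

Lemma three_step_expansion dd : 0 < dd -> l * l * dd <= q2 - 1/2 ->
  tent l (tent l (tent l (q3 + dd))) = q3 + l * l * l * dd.
Proof.
  intros H1 H2. pose proof point_order. destruct Hl.
  assert (0 < l * dd) by nra.
  rewrite (tent_right l (q3 + dd)) by lra.
  replace (l * (1 - (q3 + dd))) with (q1 - l * dd) by (rewrite <- q3_image; ring).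
  rewrite (tent_left l (q1 - l * dd)) by lra.
  replace (l * (q1 - l * dd)) with (q2 - l * l * dd) by (rewrite <- q1_image; ring).
  rewrite (tent_right l (q2 - l * l * dd)) by lra. rewrite <- q2_image. ring.
Qed.

(* The window [[q3 + window / l^3, q3 + window]] lies in the gap [(q3, crit1)]
   and is small enough for [three_step_expansion]. *)
Definition window : R := Rmin ((crit1 - q3) / 2) ((q2 - 1/2) / (l * l)).

Lemma window_facts : 0 < window /\ q3 + window < crit1 /\ l * l * window <= q2 - 1/2.
Proof.
  pose proof point_order. destruct Hl.
  pose proof (Rmin_l ((crit1 - q3) / 2) ((q2 - 1/2) / (l * l))).
  pose proof (Rmin_r ((crit1 - q3) / 2) ((q2 - 1/2) / (l * l))) as Hw.
  fold window in *. repeat split.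
  - unfold window. apply Rmin_pos; [lra | apply Rdiv_lt_0_compat; nra].
  - lra.
  - apply Rmult_le_compat_l with (r := l * l) in Hw; [|nra].
    replace (l * l * ((q2 - 1/2) / (l * l))) with (q2 - 1/2) in Hw by (field; lra). exact Hw.
Qed.

Lemma escape_to_window x : forall n s dd,
  Nat.iter s (tent l) x = q3 + dd -> 0 < dd <= window -> window <= dd * (l * l * l) ^ n ->
  exists s', (s <= s')%nat /\
    q3 + window / (l * l * l) <= Nat.iter s' (tent l) x <= q3 + window.
Proof.
  pose proof window_facts as [Hw0 [_ Hw2]]. destruct Hl.
  assert (Hl3 : 1 < l * l * l) by nra.
  induction n as [|n IH]; intros s dd Hs Hdd Hgrow.
  - exists s. split; [lia|]. rewrite Hs. simpl in Hgrow.
    assert (window / (l * l * l) <= window) by (apply Rmult_le_reg_r with (l * l * l); [lra|]; field_simplify; nra).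
    lra.
  - destruct (Rle_dec (window / (l * l * l)) dd) as [Hbig|Hnear].
    + exists s. split; [lia|]. rewrite Hs. lra.
    + apply Rnot_le_lt in Hnear.
      assert (Hdd3 : l * l * l * dd < window).
      { apply Rmult_lt_compat_l with (r := l * l * l) in Hnear; [|lra].
        replace (l * l * l * (window / (l * l * l))) with window in Hnear by (field; lra). lra. }
      destruct (IH (S (S (S s))) (l * l * l * dd)) as [s' [Hs' Hwin]].
      * simpl. rewrite Hs. apply three_step_expansion; [lra|].
        assert (l * l * dd <= l * l * window) by (apply Rmult_le_compat_l; nra). lra.
      * split; [nra | lra].
      * replace (l * l * l * dd * (l * l * l) ^ n) with (dd * (l * l * l) ^ S n) by (simpl; ring).
        exact Hgrow.
      * exists s'. split; [lia | exact Hwin].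
Qed.

Lemma landing_on_q3_misses_half x s :
  Nat.iter s (tent l) x = q3 -> ~ omega_limit (tent l) x (1/2).
Proof.
  intros Hs Hom. pose proof point_order.
  assert (Hper : forall j, let y := Nat.iter (j + s) (tent l) x in y = q1 \/ y = q2 \/ y = q3).
  { induction j as [|j IH]; simpl in *; [auto|].
    destruct IH as [-> | [-> | ->]]; rewrite ?tent_q1, ?tent_q2, ?tent_q3; auto. }
  destruct (Hom s (Rmin (1/2 - q1) (q2 - 1/2))) as [t [Ht Hclose]].
  { apply Rmin_pos; lra. }
  pose proof (Rmin_l (1/2 - q1) (q2 - 1/2)). pose proof (Rmin_r (1/2 - q1) (q2 - 1/2)).
  specialize (Hper (t - s)%nat). simpl in Hper. replace (t - s + s)%nat with t in Hper by lia.
  apply Rabs_def2 in Hclose.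
  destruct Hper as [E | [E | E]]; rewrite E in Hclose; lra.
Qed.

(** From now on [l] is tuned so that the critical orbit lands on [q3]:
    [c -> crit1 -> crit2 -> l crit2 -> ... -> l^k crit2 -> q3]. *)
Section LandingParameter.
Variable k : nat.
Hypothesis Hk : l ^ S k * crit2 = q3.

Lemma forward_from_crit2 y : crit2 <= y -> l ^ S k * (y - crit2) <= crit1 - q3 ->
  forall i, (i <= S k)%nat -> Nat.iter i (tent l) y = l ^ i * y.
Proof.
  intros Hy Hsmall. pose proof point_order. destruct Hl.
  induction i as [|i IH]; intro Hi; [simpl; ring|].
  simpl Nat.iter. rewrite IH by lia.
  assert (l ^ i * y <= l ^ k * y) by (apply Rmult_le_compat_r; [lra | apply Rle_pow; [lra | lia]]).
  assert (l ^ k * y <= 1/2).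
  { apply Rmult_le_reg_l with l; [lra|].
    replace (l * (l ^ k * y)) with (l ^ S k * crit2 + l ^ S k * (y - crit2)) by (simpl; ring).
    unfold crit1 in *. lra. }
  rewrite tent_left by lra. simpl. ring.
Qed.

Lemma critical_orbit j : (j <= S k)%nat -> Nat.iter (S (S j)) (tent l) (1/2) = l ^ j * crit2.
Proof.
  intro Hj. pose proof point_order.
  replace (S (S j)) with (j + 2)%nat by lia. rewrite Nat.iter_add. simpl.
  rewrite tent_half, tent_crit1. apply forward_from_crit2; [lra | | exact Hj].
  rewrite Rminus_diag, Rmult_0_r. lra.
Qed.

Lemma critical_orbit_lands : Nat.iter (S (S (S k))) (tent l) (1/2) = q3.
Proof. rewrite critical_orbit by lia. exact Hk. Qed.

Lemma critical_orbit_bounds i : (i <= S (S k))%nat ->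
  let y := Nat.iter i (tent l) (1/2) in 0 <= y <= 1 /\ ~ (q3 < y < crit1).
Proof.
  intro Hi. pose proof point_order. destruct Hl. unfold crit1 in *.
  destruct i as [|[|j]]; simpl Nat.iter.
  - lra.
  - rewrite tent_half. unfold crit1. lra.
  - change (tent l (tent l (Nat.iter j (tent l) (1/2)))) with (Nat.iter (S (S j)) (tent l) (1/2)).
    rewrite critical_orbit by lia.
    assert (0 <= l ^ j * crit2) by (apply Rmult_le_pos; [apply pow_le |]; lra).
    assert (l ^ j * crit2 <= l ^ k * crit2) by (apply Rmult_le_compat_r; [lra | apply Rle_pow; [lra | lia]]).
    assert (l * (l ^ k * crit2) = q3) by (rewrite <- Hk; simpl; ring).
    split; nra.
Qed.

Definition Lset (y : R) : Prop :=
  (exists i, (i <= S (S k))%nat /\ y = Nat.iter i (tent l) (1/2))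
  \/ (y = q1 \/ exists n, y = w1 n)
  \/ (y = q2 \/ exists n, y = w2 n)
  \/ (y = q3 \/ exists n, y = w3 n).

Lemma Lset_bounds y : Lset y -> 0 <= y <= 1 /\ ~ (q3 < y < crit1).
Proof.
  pose proof point_order. destruct Hl. unfold crit1 in *.
  intros [[i [Hi ->]] | [[-> | [n ->]] | [[-> | [n ->]] | [-> | [n ->]]]]];
    try (pose proof (w_bounds n); lra); try lra.
  apply critical_orbit_bounds, Hi.
Qed.

Lemma Lset_closed : closed_set Lset.
Proof.
  pose proof ratio_bounds.
  refine (closed_union _ _ _ (closed_union _ _ _ (closed_union _ _ _ _))).
  - apply closed_initial_segment.
  - apply closed_convergent, cv_geometric. lra.
  - apply closed_convergent, cv_geometric. lra.
  - apply closed_convergent, cv_geometric. lra.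
Qed.

Lemma Lset_half : Lset (1/2).
Proof. left. exists 0%nat. split; [lia | reflexivity]. Qed.
Lemma Lset_q1 : Lset q1. Proof. right; left; left; reflexivity. Qed.
Lemma Lset_q2 : Lset q2. Proof. right; right; left; left; reflexivity. Qed.
Lemma Lset_q3 : Lset q3. Proof. right; right; right; left; reflexivity. Qed.
Lemma Lset_w1 n : Lset (w1 n). Proof. right; left; right; eauto. Qed.
Lemma Lset_w2 n : Lset (w2 n). Proof. right; right; left; right; eauto. Qed.
Lemma Lset_w3 n : Lset (w3 n). Proof. right; right; right; right; eauto. Qed.

(** Internal chain transitivity: every point of [L] reaches [q3] by true orbit
    steps; from [q3] one [d]-jump at [q2] leads to a point [w3 N] close to
    [q3]; and from [w3 N] the backward orbit leads to every point of [L]. *)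
Section Chains.
Variable d : R.
Hypothesis Hd : d > 0.

Notation reachL := (reach (tent l) Lset d).

Lemma critical_orbit_reaches_q3 i : (i <= S (S k))%nat ->
  reachL (Nat.iter i (tent l) (1/2)) q3.
Proof.
  intro Hi. rewrite <- critical_orbit_lands. apply reach_iterates; [exact Hd | | lia].
  intros j Hj. destruct (Nat.eq_dec j (S (S (S k)))) as [->|Hne].
  - rewrite critical_orbit_lands. apply Lset_q3.
  - left. exists j. split; [lia | reflexivity].
Qed.

Lemma w_descends_to_half n : reachL (w1 n) (1/2).
Proof.
  induction n as [|n IH]; [rewrite w1_0; now left|].
  apply reach_trans with (w2 n); [apply reach_step; auto using Lset_w1, Lset_w2, tent_w1|].
  apply reach_trans with (w3 n); [apply reach_step; auto using Lset_w2, Lset_w3, tent_w2|].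
  apply reach_trans with (w1 n); [apply reach_step; auto using Lset_w3, Lset_w1, tent_w3|].
  exact IH.
Qed.

Lemma reach_q3 u : Lset u -> reachL u q3.
Proof.
  assert (Hhalf : reachL (1/2) q3) by (apply (critical_orbit_reaches_q3 0); lia).
  assert (H1 : forall n, reachL (w1 n) q3) by (intro; eapply reach_trans; [apply w_descends_to_half | exact Hhalf]).
  assert (H3 : forall n, reachL (w3 n) q3)
    by (intro; eapply reach_trans; [apply reach_step; auto using Lset_w3, Lset_w1, tent_w3 | apply H1]).
  assert (Hq2 : reachL q2 q3) by (apply reach_step; auto using Lset_q2, Lset_q3, tent_q2).
  intros [[i [Hi ->]] | [[-> | [n ->]] | [[-> | [n ->]] | [-> | [n ->]]]]].
  - apply critical_orbit_reaches_q3, Hi.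
  - eapply reach_trans; [apply reach_step; auto using Lset_q1, Lset_q2, tent_q1 | exact Hq2].
  - apply H1.
  - exact Hq2.
  - eapply reach_trans; [apply reach_step; auto using Lset_w2, Lset_w3, tent_w2 | apply H3].
  - now left.
  - apply H3.
Qed.

Lemma reached_from_w3 v : Lset v -> exists n, reachL (w3 n) v.
Proof.
  assert (Hhalf : reachL (w3 0) (1/2))
    by (rewrite <- w1_0; apply reach_step; auto using Lset_w3, Lset_w1, tent_w3).
  assert (Hcrit : forall i, (i <= S (S (S k)))%nat -> reachL (w3 0) (Nat.iter i (tent l) (1/2))).
  { intros i Hi. induction i as [|i IH]; [exact Hhalf|].
    apply reach_trans with (Nat.iter i (tent l) (1/2)); [apply IH; lia|].
    apply reach_step; [exact Hd | left; exists i; split; [lia | reflexivity] |  | reflexivity].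
    destruct (Nat.eq_dec i (S (S k))) as [->|Hne].
    - rewrite critical_orbit_lands. apply Lset_q3.
    - left. exists (S i). split; [lia | reflexivity]. }
  assert (Hq3 : reachL (w3 0) q3) by (rewrite <- critical_orbit_lands; apply Hcrit; lia).
  assert (Hq1 : reachL (w3 0) q1)
    by (eapply reach_trans; [exact Hq3 | apply reach_step; auto using Lset_q3, Lset_q1, tent_q3]).
  intros [[i [Hi ->]] | [[-> | [n ->]] | [[-> | [n ->]] | [-> | [n ->]]]]].
  - exists 0%nat. apply Hcrit. lia.
  - exists 0%nat. exact Hq1.
  - exists n. apply reach_step; auto using Lset_w3, Lset_w1, tent_w3.
  - exists 0%nat. eapply reach_trans; [exact Hq1 | apply reach_step; auto using Lset_q1, Lset_q2, tent_q1].
  - exists (S n). eapply reach_trans; [apply reach_step; auto using Lset_w3, Lset_w1, tent_w3|].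
    apply reach_step; auto using Lset_w1, Lset_w2, tent_w1.
  - exists 0%nat. exact Hq3.
  - exists n. now left.
Qed.

Lemma w3_descends j n : reachL (w3 (j + n)) (w3 n).
Proof.
  induction j as [|j IH]; [now left|]. simpl.
  apply reach_trans with (w1 (S (j + n))); [apply reach_step; auto using Lset_w3, Lset_w1, tent_w3|].
  apply reach_trans with (w2 (j + n)); [apply reach_step; auto using Lset_w1, Lset_w2, tent_w1|].
  apply reach_trans with (w3 (j + n)); [apply reach_step; auto using Lset_w2, Lset_w3, tent_w2|].
  exact IH.
Qed.

(* The only non-orbit step: from [q2] jump to [w3 N] instead of [T q2 = q3]. *)
Lemma q3_chains_to_w3 N : Rabs (q3 - w3 N) < d -> chain (tent l) Lset d q3 (w3 N).
Proof.
  intro HN. apply reach_chain with q2 (w3 N).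
  - apply reach_trans with q1; apply reach_step; auto using Lset_q3, Lset_q1, Lset_q2, tent_q3, tent_q1.
  - apply chain_jump; [apply Lset_q2 | apply Lset_w3 | rewrite tent_q2; exact HN].
  - now left.
Qed.
End Chains.

Lemma Lset_chain_transitive : internally_chain_transitive (tent l) Lset.
Proof.
  intros x y Hx Hy d Hd.
  destruct (reached_from_w3 d Hd y Hy) as [n Hn].
  pose proof ratio_bounds.
  destruct (cv_geometric q3 (- (dev1 / l)) ratio ltac:(lra) d Hd) as [N HN].
  specialize (HN (N + n)%nat ltac:(lia)). unfold R_dist in HN. rewrite Rabs_minus_sym in HN.
  apply reach_chain with q3 (w3 (N + n)).
  - apply reach_q3; assumption.
  - apply q3_chains_to_w3; [exact Hd | exact HN].
  - eapply reach_trans; [apply (w3_descends d Hd) | exact Hn].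
Qed.

(** An orbit accumulating on [crit2] (and on
    [c]) eventually lives in the core [[crit2, crit1]] and comes arbitrarily
    close to [crit2] from the right; [k+1] steps later it is just to the right
    of [q3] (not on [q3], as [c] is in [omega(x)]), and the expansion near the
    periodic orbit pushes it into the window, inside the gap of [L]. *)
Lemma orbit_returns_to_window x :
  omega_limit (tent l) x (1/2) -> omega_limit (tent l) x crit2 ->
  forall N, exists s, (N <= s)%nat /\
    q3 + window / (l * l * l) <= Nat.iter s (tent l) x <= q3 + window.
Proof.
  intros Hhalf Hcrit2 N. pose proof point_order. pose proof window_facts as [Hw0 [Hw1 _]].
  destruct Hl.
  destruct (orbit_enters_core l x ltac:(lra) Hcrit2) as [t0 Hcore].
  assert (Hlk : 0 < l ^ S k) by (apply pow_lt; lra).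
  destruct (Hcrit2 (Nat.max N t0) (window / l ^ S k)) as [t [Ht Hclose]].
  { apply Rdiv_lt_0_compat; assumption. }
  specialize (Hcore t ltac:(lia)). fold crit2 in Hcore.
  set (y := Nat.iter t (tent l) x) in *.
  assert (Hh : l ^ S k * (y - crit2) < window).
  { rewrite Rabs_pos_eq in Hclose by lra.
    apply Rmult_lt_compat_l with (r := l ^ S k) in Hclose; [|exact Hlk].
    replace (l ^ S k * (window / l ^ S k)) with window in Hclose by (field; lra). exact Hclose. }
  assert (Hland : Nat.iter (S k + t) (tent l) x = q3 + l ^ S k * (y - crit2)).
  { rewrite Nat.iter_add. fold y. rewrite forward_from_crit2 by (lra || lia).
    rewrite <- Hk. ring. }
  set (p := l ^ S k * (y - crit2)) in *.
  assert (Hpos : 0 < p).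
  { destruct (Rle_lt_or_eq_dec 0 p) as [Hp|Hz]; [unfold p; nra | exact Hp |].
    exfalso. apply (landing_on_q3_misses_half x (S k + t)); [|exact Hhalf].
    rewrite Hland, <- Hz. ring. }
  destruct (Pow_x_infinity (l * l * l)) with (b := window / p) as [n Hn].
  { rewrite Rabs_pos_eq; nra. }
  specialize (Hn n (le_n n)). rewrite Rabs_pos_eq in Hn by (apply pow_le; nra).
  apply Rge_le, Rmult_le_compat_l with (r := p) in Hn; [|lra].
  replace (p * (window / p)) with window in Hn by (field; lra).
  destruct (escape_to_window x n (S k + t) p Hland) as [s [Hs Hwin]]; [lra | lra |].
  exists s. split; [lia | exact Hwin].
Qed.

Lemma Lset_not_omega x : ~ (forall y, Lset y <-> omega_limit (tent l) x y).
Proof.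
  intro HL. pose proof window_facts as [Hw0 [Hw1 _]]. destruct Hl.
  assert (Hhalf : omega_limit (tent l) x (1/2)) by (apply HL, Lset_half).
  assert (Hcrit2 : omega_limit (tent l) x crit2).
  { apply HL. left. exists 2%nat. split; [lia|]. simpl. rewrite tent_half, tent_crit1. reflexivity. }
  destruct (omega_meets_interval _ _ _ _ (orbit_returns_to_window x Hhalf Hcrit2)) as [y [Hy Homy]].
  apply HL, Lset_bounds in Homy as [_ Hgap]. apply Hgap.
  assert (0 < window / (l * l * l)) by (apply Rdiv_lt_0_compat; nra).
  lra.
Qed.
End LandingParameter.
End Tent.

(** * Infinitely many landing parameters *)

Definition landing_parameter (k : nat) (l : R) : Prop :=
  13/8 <= l < 2 /\ l ^ S k * crit2 l = q3 l.

(* Existence, by the intermediate value theorem applied to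
   [l + l^2 - l^(k+1) crit2(l) (1 + l + l^2)] on [[13/8, 2]]. *)
Lemma landing_parameter_exists k : (2 <= k)%nat -> exists l, landing_parameter k l.
Proof.
  intro Hk.
  set (G := fun x => x + x * x - x ^ S k * (x * (1 - x / 2)) * (1 + x + x * x)).
  assert (HG : continuity G) by (unfold G; reg).
  assert (G2 : G 2 = 6) by (unfold G; field).
  destruct (IVT G (13/8) 2 HG) as [z [Hz Gz]].
  - lra.
  - unfold G. assert (HP : (13/8) ^ 3 <= (13/8) ^ S k) by (apply Rle_pow; [lra | lia]).
    replace ((13/8) ^ 3) with (2197/512) in HP by (simpl; field). lra.
  - lra.
  - assert (z <> 2) by (intros ->; lra).
    exists z. split; [lra|]. unfold G in Gz. unfold crit2, q3, denom.
    field_simplify_eq; [lra | nra].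
Qed.

Lemma landing_parameter_order k k' l :
  landing_parameter k l -> landing_parameter k' l -> k = k'.
Proof.
  intros [Hl Hk] [_ Hk']. pose proof (point_order l Hl) as [[Hc _] _].
  assert (E : l ^ S k = l ^ S k') by (apply Rmult_eq_reg_r with (crit2 l); lra).
  destruct (Nat.lt_trichotomy k k') as [h | [h | h]]; auto.
  - pose proof (Rlt_pow l (S k) (S k') ltac:(lra) ltac:(lia)). lra.
  - pose proof (Rlt_pow l (S k') (S k) ltac:(lra) ltac:(lia)). lra.
Qed.

Lemma landing_parameter_avoids (lst : list R) : forall K,
  exists k l, (K <= k)%nat /\ landing_parameter k l /\ ~ In l lst.
Proof.
  induction lst as [|h t IH]; intro K.
  - destruct (landing_parameter_exists (K + 2) ltac:(lia)) as [l Hl].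
    exists (K + 2)%nat, l. split; [lia | split; [exact Hl | intros []]].
  - destruct (IH K) as [k1 [l1 [Hk1 [Hl1 Hn1]]]].
    destruct (Req_dec l1 h) as [->|Hne].
    + destruct (IH (S k1)) as [k2 [l2 [Hk2 [Hl2 Hn2]]]].
      exists k2, l2. split; [lia | split; [exact Hl2|]].
      intros [<- | Hin]; [|contradiction].
      pose proof (landing_parameter_order _ _ _ Hl1 Hl2). lia.
    + exists k1, l1. split; [exact Hk1 | split; [exact Hl1|]].
      intros [-> | Hin]; [lra | contradiction].
Qed.

Theorem mainTheorem1 :
  forall l : list R,
    exists lam : R,
      ~ In lam l /\ sqrt 2 < lam < 2 /\
      exists L : R -> Prop,
        (forall y, L y -> unit_interval y) /\
        closed_set L /\
        (exists y, L y) /\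
        internally_chain_transitive (tent lam) L /\
        (forall x, unit_interval x ->
           ~ (forall y, L y <-> omega_limit (tent lam) x y)).
Proof.
  intro lst.
  destruct (landing_parameter_avoids lst 0) as [k [lam [_ [[Hlam Hk] Hnew]]]].
  exists lam. split; [exact Hnew|]. split.
  { split; [|apply Hlam]. pose proof (sqrt_sqrt 2 ltac:(lra)). pose proof (sqrt_pos 2). nra. }
  exists (Lset lam k). split; [|split; [|split; [|split]]].
  - intros y Hy. apply (Lset_bounds lam Hlam k Hk y Hy).
  - apply (Lset_closed lam Hlam k).
  - exists (1/2). apply Lset_half.
  - apply (Lset_chain_transitive lam Hlam k Hk).
  - intros x _. apply (Lset_not_omega lam Hlam k Hk x).
Qed.
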